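(* Let $L, M$ be complete lattices and $f:L\to M$ a complete lattice homomorphism (preserving arbitrary joins and meets). If a set filter $\mathcal{F}$ on $L$ star-converges to $x\in L$, then $f(\mathcal{F})$ star-converges to $f(x)$ in $M$.
   Context: A set filter on a set $P$ is a nonempty collection of subsets of $P$ not containing $\emptyset$, closed under finite intersections and under supersets; if $\mathcal{F}\subseteq\mathcal{G}$ are set filters, $\mathcal{G}$ is a super-filter of $\mathcal{F}$. For a subset $S$ of a poset, $S^u$ and $S^\ell$ denote the sets of upper and lower bounds of $S$. For a set filter $\mathcal{F}$ on a complete lattice $P$, put $\mathcal{F}^u=\bigcup\{F^u: F\in\mathcal{F}\}$, $\mathcal{F}^\ell=\bigcup\{F^\ell: F\in\mathcal{F}\}$; $\mathcal{F}$ order-converges to $x$, written $\mathcal{F}\to x$, if $\bigwedge\mathcal{F}^u=x=\bigvee\mathcal{F}^\ell$. $\mathcal{F}$ star-converges to $x$ if for every super-filter $\mathcal{F}'$ of $\mathcal{F}$ there is a super-filter $\mathcal{G}$ of $\mathcal{F}'$ with $\mathcal{G}\to x$. For a map $f:X\to Y$ and a set filter $\mathcal{F}$ on $X$, $f(\mathcal{F})$ is the set filter on $Y$ of all subsets of $Y$ containing $f(F)$ for some $F\in\mathcal{F}$. *)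

From Stdlib Require Import Classical.

Set Implicit Arguments.

Record CompleteLattice := {
  carrier :> Type;
  le : carrier -> carrier -> Prop;
  le_refl : forall x, le x x;
  le_trans : forall x y z, le x y -> le y z -> le x z;
  le_antisym : forall x y, le x y -> le y x -> x = y;
  sup : (carrier -> Prop) -> carrier;
  inf : (carrier -> Prop) -> carrier;
  sup_ub : forall S x, S x -> le x (sup S);
  sup_least : forall S y, (forall x, S x -> le x y) -> le (sup S) y;
  inf_lb : forall S x, S x -> le (inf S) x;
  inf_greatest : forall S y, (forall x, S x -> le y x) -> le y (inf S)
}.

Arguments le {c} _ _.
Arguments sup {c} _.
Arguments inf {c} _.

Definition image {X Y : Type} (f : X -> Y) (S : X -> Prop) : Y -> Prop :=
  fun y => exists x, S x /\ f x = y.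

Definition complete_hom (L M : CompleteLattice) (f : L -> M) : Prop :=
  (forall S : L -> Prop, f (sup S) = sup (image f S)) /\
  (forall S : L -> Prop, f (inf S) = inf (image f S)).

Definition set_filter {P : Type} (F : (P -> Prop) -> Prop) : Prop :=
  (exists A, F A) /\
  ~ F (fun _ => False) /\
  (forall A B, F A -> F B -> F (fun x => A x /\ B x)) /\
  (forall A B, F A -> (forall x, A x -> B x) -> F B).

Definition subfilter {P : Type} (F G : (P -> Prop) -> Prop) : Prop :=
  forall A, F A -> G A.

Definition ubounds {L : CompleteLattice} (S : L -> Prop) : L -> Prop :=
  fun y => forall x, S x -> le x y.
Definition lbounds {L : CompleteLattice} (S : L -> Prop) : L -> Prop :=
  fun y => forall x, S x -> le y x.

Definition filter_ub {L : CompleteLattice} (F : (L -> Prop) -> Prop) : L -> Prop :=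
  fun y => exists A, F A /\ ubounds A y.
Definition filter_lb {L : CompleteLattice} (F : (L -> Prop) -> Prop) : L -> Prop :=
  fun y => exists A, F A /\ lbounds A y.

Definition order_conv {L : CompleteLattice} (F : (L -> Prop) -> Prop) (x : L) : Prop :=
  inf (filter_ub F) = x /\ sup (filter_lb F) = x.

Definition star_conv {L : CompleteLattice} (F : (L -> Prop) -> Prop) (x : L) : Prop :=
  forall F', set_filter F' -> subfilter F F' ->
    exists G, set_filter G /\ subfilter F' G /\ order_conv G x.

Definition image_filter {X Y : Type} (f : X -> Y) (F : (X -> Prop) -> Prop)
  : (Y -> Prop) -> Prop :=
  fun B => exists A, F A /\ forall x, A x -> B (f x).


(* Given a super-filter F' of f(F), the filter generated by F and the preimages
   of the members of F' is proper, because f(F) is contained in F'.  Star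
   convergence of F gives a super-filter G of it with G -> x.  Then f(G)
   contains F', and f(G) -> f(x) since a complete homomorphism carries
   inf G^u and sup G^l to inf f(G)^u and sup f(G)^l. *)

Lemma complete_hom_mono {L M : CompleteLattice} {f : L -> M} :
  complete_hom L M f -> forall a b : L, le a b -> le (f a) (f b).
Proof.
  intros [hsup _] a b hab.
  assert (Eb : sup (fun z => z = a \/ z = b) = b).
  { apply le_antisym.
    - apply sup_least. intros z [-> | ->]; [exact hab | apply le_refl].
    - apply sup_ub. now right. }
  rewrite <- Eb, hsup. apply sup_ub. exists a. auto.
Qed.

Lemma image_filter_image {X Y : Type} (f : X -> Y) (F : (X -> Prop) -> Prop) A :
  F A -> image_filter f F (image f A).
Proof. intros hA. exists A. split; [exact hA | intros a ha; now exists a]. Qed.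

Lemma image_filter_set_filter {X Y : Type} (f : X -> Y) (F : (X -> Prop) -> Prop) :
  set_filter F -> set_filter (image_filter f F).
Proof.
  intros [[A0 hA0] [hne [hI hS]]]. split; [| split; [| split]].
  - exists (image f A0). now apply image_filter_image.
  - intros [A [hA hAB]]. apply hne. now apply (hS A).
  - intros B1 B2 [A1 [h1 k1]] [A2 [h2 k2]].
    exists (fun z => A1 z /\ A2 z). split; [now apply hI |].
    intros z [? ?]; auto.
  - intros B1 B2 [A [hA hAB]] hsub. exists A. auto.
Qed.

Section ImageOrderLimits.

Variables (L M : CompleteLattice) (f : L -> M).
Hypothesis hf : complete_hom L M f.

Lemma complete_hom_inf_filter_ub (G : (L -> Prop) -> Prop) :
  f (inf (filter_ub G)) = inf (filter_ub (image_filter f G)).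
Proof.
  destruct hf as [hsup hinf]. apply le_antisym.
  - apply inf_greatest. intros y [B [[A [hA hAB]] hy]].
    apply le_trans with (f (sup A)).
    + apply (complete_hom_mono hf), inf_lb.
      exists A. split; [exact hA | intros a ha; now apply sup_ub].
    + rewrite hsup. apply sup_least. intros w [a [ha <-]]. now apply hy, hAB.
  - rewrite hinf. apply inf_greatest. intros y [u [[A [hA hu]] <-]].
    apply inf_lb. exists (image f A). split; [now apply image_filter_image |].
    intros w [a [ha <-]]. now apply (complete_hom_mono hf), hu.
Qed.

Lemma complete_hom_sup_filter_lb (G : (L -> Prop) -> Prop) :
  f (sup (filter_lb G)) = sup (filter_lb (image_filter f G)).
Proof.
  destruct hf as [hsup hinf]. apply le_antisym.
  - rewrite hsup. apply sup_least. intros y [u [[A [hA hu]] <-]].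
    apply sup_ub. exists (image f A). split; [now apply image_filter_image |].
    intros w [a [ha <-]]. now apply (complete_hom_mono hf), hu.
  - apply sup_least. intros y [B [[A [hA hAB]] hy]].
    apply le_trans with (f (inf A)).
    + rewrite hinf. apply inf_greatest. intros w [a [ha <-]]. now apply hy, hAB.
    + apply (complete_hom_mono hf), sup_ub.
      exists A. split; [exact hA | intros a ha; now apply inf_lb].
Qed.

Lemma order_conv_image_filter (G : (L -> Prop) -> Prop) (x : L) :
  order_conv G x -> order_conv (image_filter f G) (f x).
Proof.
  intros [hu hl]. split.
  - now rewrite <- complete_hom_inf_filter_ub, hu.
  - now rewrite <- complete_hom_sup_filter_lb, hl.
Qed.

End ImageOrderLimits.

Section PullbackFilter.

Context {X Y : Type}.
Variables (f : X -> Y) (F : (X -> Prop) -> Prop) (F' : (Y -> Prop) -> Prop).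

Definition pullback_filter : (X -> Prop) -> Prop :=
  fun C => exists A B, F A /\ F' B /\ forall z, A z -> B (f z) -> C z.

Hypotheses (hF : set_filter F) (hF' : set_filter F')
  (hFF' : subfilter (image_filter f F) F').

Lemma pullback_filter_set_filter : set_filter pullback_filter.
Proof.
  destruct hF as [[A0 hA0] [hFne [hFI hFS]]].
  destruct hF' as [[B0 hB0] [hF'ne [hF'I hF'S]]].
  split; [| split; [| split]].
  - exists (fun _ => True), A0, B0. auto.
  - intros [A [B [hA [hB hAB]]]]. apply hF'ne.
    apply (hF'S (fun y => B y /\ image f A y)).
    + apply hF'I; [exact hB |]. now apply hFF', image_filter_image.
    + intros y [hy [a [ha <-]]]. exact (hAB a ha hy).
  - intros C1 C2 [A1 [B1 [h1 [k1 c1]]]] [A2 [B2 [h2 [k2 c2]]]].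
    exists (fun z => A1 z /\ A2 z), (fun y => B1 y /\ B2 y).
    split; [now apply hFI |]. split; [now apply hF'I |].
    intros z [? ?] [? ?]; auto.
  - intros C1 C2 [A [B [hA [hB hAB]]]] hC. exists A, B. auto.
Qed.

Lemma subfilter_pullback_filter : subfilter F pullback_filter.
Proof.
  destruct hF' as [[B0 hB0] _]. intros A hA. exists A, B0. auto.
Qed.

Lemma subfilter_image_filter_pullback (G : (X -> Prop) -> Prop) :
  subfilter pullback_filter G -> subfilter F' (image_filter f G).
Proof.
  destruct hF as [[A0 hA0] [_ [_ hFS]]].
  intros hG B hB. exists (fun z => B (f z)). split; [| auto].
  apply hG. exists (fun _ => True), B. split; [now apply (hFS A0) |]. auto.
Qed.

End PullbackFilter.

Theorem mainTheorem4 (L M : CompleteLattice) (f : L -> M)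
  (hf : complete_hom L M f)
  (F : (L -> Prop) -> Prop) (hF : set_filter F) (x : L) :
  star_conv F x -> star_conv (image_filter f F) (f x).
Proof.
  intros hstar F' hF' hFF'.
  destruct (hstar (pullback_filter f F F')) as [G [hG [hFG hGx]]].
  - now apply pullback_filter_set_filter.
  - now apply subfilter_pullback_filter.
  - exists (image_filter f G). split; [| split].
    + now apply image_filter_set_filter.
    + now apply (subfilter_image_filter_pullback f F F' hF).
    + now apply order_conv_image_filter.
Qed.
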